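(* Let $A$ be a square real matrix that is weakly diagonally dominant, is a Z-matrix, and has nonnegative diagonal entries. Then the following are equivalent: (i) $A$ is a nonsingular M-matrix; (ii) $A$ is nonsingular; (iii) $A$ is weakly chained diagonally dominant.
   Context: For a complex matrix $A=(a_{ij})$: row $i$ is strictly diagonally dominant (s.d.d.) if $|a_{ii}|>\sum_{j\ne i}|a_{ij}|$ and weakly diagonally dominant (w.d.d.) if $|a_{ii}|\ge\sum_{j\ne i}|a_{ij}|$; the matrix is s.d.d. (resp. w.d.d.) if all its rows are. The directed adjacency graph of an $(M+1)\times(M+1)$ matrix has vertices $\{0,\dots,M\}$ and an edge $i\to j$ iff $a_{ij}\ne0$. A square matrix is weakly chained diagonally dominant (w.c.d.d.) if it is w.d.d. and for every row $i_1$ that is not s.d.d. there is a walk $i_1\to i_2\to\cdots\to i_k$ in its adjacency graph with $i_k$ an s.d.d. row. A Z-matrix is a real matrix with nonpositive off-diagonal entries. A nonsingular M-matrix is a Z-matrix that is monotone, i.e. nonsingular with entrywise nonnegative inverse. *)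

From HB Require Import structures.
From mathcomp Require Import all_boot all_order all_algebra.
Set Implicit Arguments. Unset Strict Implicit. Unset Printing Implicit Defensive.
Import Order.TTheory GRing.Theory Num.Theory.
Local Open Scope ring_scope.

Section Defs.
Variables (R : realFieldType) (n : nat).
Implicit Types (A : 'M[R]_n) (i j : 'I_n).

Definition offdiag_rowsum A i : R := \sum_(j < n | j != i) `|A i j|.

Definition sdd_row A i : bool := offdiag_rowsum A i < `|A i i|.
Definition wdd_row A i : bool := offdiag_rowsum A i <= `|A i i|.

Definition wdd A : Prop := forall i, wdd_row A i.

Definition adj A : rel 'I_n := fun i j => A i j != 0.

(* weakly chained diagonally dominant: w.d.d. and every non-s.d.d. row i has a
   walk i = i_1 -> i_2 -> ... -> i_k in the adjacency graph ending at an
   s.d.d. row (the walk is i :: s, its end is last i s). *)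
Definition wcdd A : Prop :=
  wdd A /\
  forall i, ~~ sdd_row A i ->
    exists s : seq 'I_n, path (adj A) i s /\ sdd_row A (last i s).

Definition Zmatrix A : Prop := forall i j, i != j -> A i j <= 0.

Definition monotone A : Prop :=
  A \in unitmx /\ forall i j, 0 <= invmx A i j.

Definition nonsingular_Mmatrix A : Prop := Zmatrix A /\ monotone A.

End Defs.

From HB Require Import structures.
From mathcomp Require Import all_boot all_order all_algebra.
From mathcomp Require Import ring lra.
Import Order.TTheory GRing.Theory Num.Theory.
Local Open Scope ring_scope.

(* For a Z-matrix, (A x)_k = \sum_(j != k) a_kj (x_j - x_k) + x_k r_k, where the
   row surplus r_k = a_kk - \sum_(j != k) |a_kj| is nonnegative and vanishes
   exactly on the rows that are not s.d.d.  Discrete minimum principle: if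
   A x >= 0 and x has a negative minimum, the set of its minimisers contains no
   s.d.d. row and is closed in the adjacency graph.  Weak chaining forbids such
   a set, so A x >= 0 implies x >= 0, which gives both nonsingularity and
   A^-1 >= 0.  Conversely, if some row reaches no s.d.d. row, the set of rows it
   reaches is such a closed set, and evaluating A z = 1 at a minimiser over this
   set of z = A^-1 1 gives 1 <= 0. *)

Section WeaklyChainedDiagonalDominance.
Variables (R : realFieldType) (n : nat) (A : 'M[R]_n).
Hypotheses (hwdd : wdd A) (hZ : Zmatrix A) (hdiag : forall i, 0 <= A i i).
Implicit Types (x : 'cV[R]_n) (T : pred 'I_n).

Definition row_surplus k : R := A k k - offdiag_rowsum A k.

Definition sdd_free_closed T :=
  forall k, T k -> ~~ sdd_row A k /\ forall j, adj A k j -> T j.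

Lemma sdd_rowE k : sdd_row A k = (0 < row_surplus k).
Proof. by rewrite /sdd_row /row_surplus ger0_norm // subr_gt0. Qed.

Lemma row_surplus_ge0 k : 0 <= row_surplus k.
Proof. by have := hwdd k; rewrite /wdd_row /row_surplus ger0_norm // subr_ge0. Qed.

Lemma row_surplus_eq0 k : ~~ sdd_row A k -> row_surplus k = 0.
Proof.
rewrite sdd_rowE -leNgt => surplus_le0.
by apply/eqP; rewrite eq_le surplus_le0 row_surplus_ge0.
Qed.

Lemma offdiag_rowsumE k : offdiag_rowsum A k = - \sum_(j | j != k) A k j.
Proof.
rewrite /offdiag_rowsum -sumrN; apply: eq_bigr => j jk.
by rewrite ler0_norm // hZ // eq_sym.
Qed.

Lemma mulmx_row_expand x k :
  (A *m x) k 0 = \sum_(j | j != k) A k j * (x j 0 - x k 0) + x k 0 * row_surplus k.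
Proof.
rewrite mxE (bigD1 k) //= /row_surplus offdiag_rowsumE opprK mulrDr.
have -> : \sum_(j | j != k) A k j * (x j 0 - x k 0) =
          \sum_(j | j != k) A k j * x j 0 - x k 0 * \sum_(j | j != k) A k j.
  by rewrite mulr_sumr -sumrB; apply: eq_bigr => j _; ring.
ring.
Qed.

Lemma offdiag_term_le0 x k j :
  j != k -> x k 0 <= x j 0 -> A k j * (x j 0 - x k 0) <= 0.
Proof.
move=> jk xkj; apply: mulr_le0_ge0; last by rewrite subr_ge0.
by apply: hZ; rewrite eq_sym.
Qed.

Lemma offdiag_sum_le0 x k :
  (forall j, adj A k j -> x k 0 <= x j 0) ->
  \sum_(j | j != k) A k j * (x j 0 - x k 0) <= 0.
Proof.
move=> xk_min; apply: sumr_le0 => j jk.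
have [-> | Akj] := eqVneq (A k j) 0; first by rewrite mul0r.
exact: offdiag_term_le0 (xk_min j Akj).
Qed.

Lemma offdiag_sum_eq0_adj x k :
  (forall j, x k 0 <= x j 0) ->
  \sum_(j | j != k) A k j * (x j 0 - x k 0) = 0 ->
  forall j, adj A k j -> x j 0 = x k 0.
Proof.
move=> xk_min sum0 j Akj; have [-> // | jk] := eqVneq j k.
have terms_ge0 i : i != k -> 0 <= - (A k i * (x i 0 - x k 0)).
  by move=> ik; rewrite oppr_ge0 offdiag_term_le0.
have terms_sum0 : \sum_(i | i != k) - (A k i * (x i 0 - x k 0)) = 0.
  by rewrite sumrN sum0 oppr0.
have /eqP := psumr_eq0P terms_ge0 terms_sum0 jk.
by rewrite oppr_eq0 mulf_eq0 (negbTE Akj) subr_eq0 => /eqP.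
Qed.

Lemma argmin_sdd_free_closed x k :
  (forall i, 0 <= (A *m x) i 0) -> x k 0 < 0 -> (forall j, x k 0 <= x j 0) ->
  sdd_free_closed [pred j | x j 0 == x k 0].
Proof.
move=> Ax_ge0 xk_lt0 xk_min l /eqP xl.
have xl_min j : x l 0 <= x j 0 by rewrite xl.
have xl_lt0 : x l 0 < 0 by rewrite xl.
have sum_le0 := offdiag_sum_le0 _ _ (fun j _ => xl_min j).
have surplus_term_le0 : x l 0 * row_surplus l <= 0.
  by apply: mulr_le0_ge0; [exact: ltW | exact: row_surplus_ge0].
have := Ax_ge0 l; rewrite mulmx_row_expand => Axl_ge0.
have sum0 : \sum_(j | j != l) A l j * (x j 0 - x l 0) = 0 by lra.
have /eqP : x l 0 * row_surplus l = 0 by lra.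
rewrite mulf_eq0 (negbTE (ltr0_neq0 xl_lt0)) /= => /eqP surplus0.
split; first by rewrite sdd_rowE surplus0 ltxx.
by move=> j /(offdiag_sum_eq0_adj _ _ xl_min sum0) xjl; rewrite /= xjl xl.
Qed.

Lemma wcdd_sdd_free_closed T k : wcdd A -> sdd_free_closed T -> ~~ T k.
Proof.
move=> [_ chained] hT; apply/negP => Tk.
have [s [s_path s_sdd]] := chained k (proj1 (hT k Tk)).
elim: s k Tk s_path s_sdd => [|j s IHs] k Tk /=.
  by move=> _ k_sdd; case/negP: (proj1 (hT k Tk)).
case/andP=> kj s_path; exact: IHs ((proj2 (hT k Tk)) j kj) s_path.
Qed.

Lemma wcdd_mulmx_ge0 x : wcdd A -> (forall i, 0 <= (A *m x) i 0) ->
  forall i, 0 <= x i 0.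
Proof.
move=> hw Ax_ge0 i; rewrite leNgt; apply/negP => xi_lt0.
have [k _ k_min] := @arg_minP _ _ _ i predT (fun j => x j 0) isT.
have xk_lt0 : x k 0 < 0 := le_lt_trans (k_min i isT) xi_lt0.
have xk_min j : x k 0 <= x j 0 by exact: k_min.
have := argmin_sdd_free_closed _ _ Ax_ge0 xk_lt0 xk_min.
by move/(wcdd_sdd_free_closed _ k hw); rewrite /= eqxx.
Qed.

Lemma wcdd_mulmx_eq0 x : wcdd A -> A *m x = 0 -> x = 0.
Proof.
move=> hw Ax0.
have kernel_ge0 (y : 'cV[R]_n) : A *m y = 0 -> forall i, 0 <= y i 0.
  by move=> Ay0; apply: wcdd_mulmx_ge0 => // l; rewrite Ay0 mxE.
apply/matrixP => i j; rewrite ord1 mxE; apply/eqP; rewrite eq_le kernel_ge0 // andbT.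
by have := kernel_ge0 (- x) _ i; rewrite mulmxN Ax0 oppr0 mxE oppr_ge0; apply.
Qed.

Lemma wcdd_unitmx : wcdd A -> A \in unitmx.
Proof.
move=> hw; rewrite unitmxE unitfE -det_tr; apply/negP => /det0P [v v_neq0 vA0].
have /(congr1 trmx) : v^T = 0.
  by apply: wcdd_mulmx_eq0 => //; rewrite -[A]trmxK -trmx_mul vA0 trmx0.
by rewrite trmxK trmx0 => /eqP; rewrite (negbTE v_neq0).
Qed.

Lemma wcdd_invmx_ge0 : wcdd A -> forall i j, 0 <= invmx A i j.
Proof.
move=> hw i j; have := wcdd_mulmx_ge0 (invmx A *m delta_mx j 0) hw _ i.
rewrite -colE mxE; apply=> l.
by rewrite colE mulKVmx ?wcdd_unitmx // mxE ler0n.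
Qed.

Lemma unitmx_sdd_free_closed T k : A \in unitmx -> sdd_free_closed T -> ~~ T k.
Proof.
move=> hu hT; apply/negP => Tk.
pose z : 'cV[R]_n := invmx A *m const_mx 1.
have [m Tm m_min] := @arg_minP _ _ _ k T (fun j => z j 0) Tk.
have [m_nsdd m_closed] := hT m Tm.
have := offdiag_sum_le0 z m (fun j Amj => m_min j (m_closed j Amj)).
have := congr1 (fun M : 'cV[R]_n => M m 0) (mulKVmx hu (const_mx 1)).
rewrite /= mulmx_row_expand row_surplus_eq0 // mulr0 addr0 => ->.
by rewrite mxE ler10.
Qed.

Lemma sdd_free_closed_wcdd :
  (forall T k, sdd_free_closed T -> ~~ T k) -> wcdd A.
Proof.
move=> no_closed; split=> // i i_nsdd.
have [/existsP [k /andP [/connectP [s s_path ->] k_sdd]] | no_sdd] :=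
  boolP [exists k, connect (adj A) i k && sdd_row A k].
  by exists s.
have reach_closed : sdd_free_closed (connect (adj A) i).
  move=> k ik; split.
    by apply: contra no_sdd => k_sdd; apply/existsP; exists k; rewrite ik.
  by move=> j kj; apply: connect_trans ik (connect1 kj).
by case/negP: (no_closed _ i reach_closed); exact: connect0.
Qed.

Lemma unitmx_wcdd : A \in unitmx -> wcdd A.
Proof.
by move=> hu; apply: sdd_free_closed_wcdd => T k; exact: unitmx_sdd_free_closed.
Qed.

End WeaklyChainedDiagonalDominance.

Theorem theorem3p7 (R : realFieldType) (n : nat) (A : 'M[R]_n)
  (hwdd : wdd A) (hZ : Zmatrix A) (hdiag : forall i, 0 <= A i i) :
  (nonsingular_Mmatrix A <-> A \in unitmx) /\
  (A \in unitmx <-> wcdd A).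
Proof.
split; last by split; [exact: unitmx_wcdd | exact: wcdd_unitmx].
split=> [[_ []] // | hu]; split=> //; split=> //.
by apply: wcdd_invmx_ge0 => //; exact: unitmx_wcdd.
Qed.
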